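(* Let $D=E[\max(0,v-E[v])]>0$ and let $0<c'\le D$. Put $p_{c'}=c'/D$ and let $G_{c'}$ be the cdf of the distribution placing mass $p_{c'}$ at $E[v]$ and mass $1-p_{c'}$ at $v^{\max}$. Then $U_{\text{coop}}(G_{c'})=c'$ and $U_{\text{heur}}(G_{c'})=0$, so $U_{\text{coop}}(G_{c'})-U_{\text{heur}}(G_{c'})=c'$; hence Mechanism 1 with $G_{c'}$ is truthful for every cost $c<c'$. Moreover, the principal's expected loss (when the agent plays the cooperative strategy) $L_{\text{net}}(G_{c'})=E\big[\int_{[v^{\min},v]}(v-r)\,dG_{c'}(r)\big]$ equals $c'$. More generally, for every $G\in\mathcal{G}$, $L_{\text{net}}(G)=U_{\text{coop}}(G)=E[\widehat G(v)]$.
   Context: $v$ is a random variable supported in $[v^{\min},v^{\max}]$, $0\le v^{\min}<v^{\max}$. $\mathcal{G}$ is the set of cdfs of probability measures on $[v^{\min},v^{\max}]$, $\widehat G(x)=\int_{v^{\min}}^xG(r)\,dr$. Mechanism 1: the principal secretly draws a price $r$ (from $G$, in the limit where the $\epsilon$-uniform perturbation vanishes), the agent bids $b$, and if $b\ge r$ the agent gets the object (common value $v$) and pays $r$. $U_{\text{coop}}(G)=E\big[\sup_{b}\int_{[v^{\min},b]}(v-r)\,dG(r)\big]$, $U_{\text{heur}}(G)=\sup_{b}\int_{[v^{\min},b]}(E[v]-r)\,dG(r)$; Mechanism 1 is truthful for cost $c$ if $U_{\text{coop}}(G)-U_{\text{heur}}(G)>c$. The principal's loss when the object is sold at price $r$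 is $v-r$. *)

From HB Require Import structures.
From mathcomp Require Import all_boot all_order all_algebra.
From mathcomp Require Import all_classical all_reals all_analysis.
Set Implicit Arguments. Unset Strict Implicit. Unset Printing Implicit Defensive.
Import Order.TTheory GRing.Theory Num.Theory.
Local Open Scope classical_set_scope.
Local Open Scope ring_scope.

Section Mechanism.
Variables (R : realType) (d : measure_display) (T : measurableType d).
Variable (P : probability T R) (v : T -> R) (vmin : R).

Definition Ev : R := fine (\int[P]_t (v t)%:E).

Definition Dgap : \bar R := (\int[P]_t (Num.max 0 (v t - Ev))%:E)%E.

(* A distribution G in \mathcal G is represented by its probability measure
   mu on R (Borel); its cdf is G(x) = mu(]-oo, x]). *)
Definition Gcdf (mu : probability R R) (x : R) : R := fine (mu [set` `]-oo, x]]).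

Definition Ghat (mu : probability R R) (x : R) : \bar R :=
  (\int[lebesgue_measure]_(r in [set` `[vmin, x]]) (Gcdf mu r)%:E)%E.

Definition Ucoop (mu : probability R R) : \bar R :=
  (\int[P]_t ereal_sup (range (fun b : R =>
     (\int[mu]_(r in [set` `[vmin, b]]) (v t - r)%:E)%E)))%E.

Definition Uheur (mu : probability R R) : \bar R :=
  ereal_sup (range (fun b : R =>
     (\int[mu]_(r in [set` `[vmin, b]]) (Ev - r)%:E)%E)).

Definition truthful (mu : probability R R) (c : R) : Prop :=
  (Ucoop mu - Uheur mu > c%:E)%E.

Definition Lnet (mu : probability R R) : \bar R :=
  (\int[P]_t (\int[mu]_(r in [set` `[vmin, v t]]) (v t - r)%:E)%E)%E.

End Mechanism.

From HB Require Import structures.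
From mathcomp Require Import all_boot all_order all_algebra.
From mathcomp Require Import all_classical all_reals all_analysis.
From mathcomp Require Import measurable_realfun.
Import Order.TTheory GRing.Theory Num.Theory.
Local Open Scope classical_set_scope.
Local Open Scope ring_scope.

(* For a fixed value x, the price integral b |-> \int_[vmin, b] (x - r) dG(r)
   collects exactly the nonnegative part of its integrand at b = x, so its
   supremum is attained there: the cooperative agent bids its value, which is
   why L_net = U_coop.  Writing x - r as the Lebesgue measure of [r, x] and
   exchanging the integrals (Tonelli) turns that value into
   \int_[vmin, x] G(s) ds = \widehat G(x).  For the two-point G_{c'}, the
   integrand is p_{c'} max(0, x - E[v]) (the atom at vmax contributes nothing
   since x <= vmax), whose expectation is p_{c'} D = c'; the heuristic agent,
   whose value is E[v], gets p_{c'} max(0, 0) = 0. *)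

Section integral_order.
Context d (T : measurableType d) (R : realType) (mu : {measure set T -> \bar R}).
Local Open Scope ereal_scope.

Lemma le_measurable_integral (D : set T) (f g : T -> \bar R) :
  measurable D -> measurable_fun D f -> measurable_fun D g ->
  {in D, forall x, f x <= g x} ->
  \int[mu]_(x in D) f x <= \int[mu]_(x in D) g x.
Proof.
move=> mD mf mg fg; rewrite integralE [leRHS]integralE leeB //.
- apply: ge0_le_integral => //; try exact: measurable_funepos;
    try by move=> ? _; exact: funepos_ge0.
  by move=> x Dx; apply: funepos_le fg _ _; apply/mem_set.
- apply: ge0_le_integral => //; try exact: measurable_funeneg;
    try by move=> ? _; exact: funeneg_ge0.
  by move=> x Dx; apply: funeneg_le fg _ _; apply/mem_set.
Qed.

End integral_order.

Section price_integral.
Context {R : realType}.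
Local Open Scope ereal_scope.
Implicit Types (a b x : R) (mu : {measure set R -> \bar R}).

Lemma measurable_EFin_subr x (D : set R) : measurable_fun D (fun r => (x - r)%:E).
Proof. by apply/measurable_EFinP; exact: measurable_funB. Qed.

Lemma integral_itv_subr_le mu a b x :
  \int[mu]_(r in [set` `[a, b]]) (x - r)%:E <=
  \int[mu]_(r in [set` `[a, x]]) (x - r)%:E.
Proof.
rewrite !(integral_mkcond [set` `[a, _]]).
apply: le_measurable_integral => //;
  try exact: (measurable_restrictT _ (measurable_itv _)).1 (measurable_EFin_subr _ _).
move=> r _; rewrite /patch !mem_setE /= !in_itv /=.
case: (boolP (a <= r)%R) => //= ar.
case: (boolP (r <= b)%R) => rb; case: (boolP (r <= x)%R) => rx //=.
- by rewrite lee_fin subr_le0 ltW // ltNge.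
- by rewrite lee_fin subr_ge0.
Qed.

Lemma ereal_sup_integral_itv_subr mu a x :
  ereal_sup (range (fun b => \int[mu]_(r in [set` `[a, b]]) (x - r)%:E)) =
  \int[mu]_(r in [set` `[a, x]]) (x - r)%:E.
Proof.
apply/eqP; rewrite eq_le; apply/andP; split.
  by apply: ge_ereal_sup => _ [b _ <-]; exact: integral_itv_subr_le.
by apply: ereal_sup_ubound; exists x.
Qed.

Lemma measure_Iic_eq_Icc mu a s : mu [set` `]-oo, a[] = 0 ->
  mu [set` `]-oo, s]] = mu [set` `[a, s]].
Proof.
move=> mu0; apply/eqP; rewrite eq_le; apply/andP; split.
  apply: (le_trans (le_measure _ _ _ (_ : _ `<=` [set` `]-oo, a[] `|` [set` `[a, s]]))).
  - by rewrite inE.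
  - by rewrite inE; exact: measurableU.
  - move=> r /=; rewrite in_itv /= => rs.
    by case: (ltP r a) => ra; [left|right]; rewrite /= in_itv /= ?ra ?rs.
  by rewrite (le_trans (measureU2 mu _ _)) // [X in X + _]mu0 add0e.
by apply: le_measure; rewrite ?inE // => r /=; rewrite !in_itv /= => /andP[].
Qed.

(* Tonelli on the indicator of the triangle a <= r <= s <= x: its r-sections
   have Lebesgue measure x - r, its s-sections have mu-measure mu [a, s]. *)
Lemma integral_itv_subr_Fubini (mu : {sigma_finite_measure set R -> \bar R}%R) a x :
  \int[mu]_(r in [set` `[a, x]]) (x - r)%:E =
  \int[lebesgue_measure]_(s in [set` `[a, x]]) mu [set` `[a, s]].
Proof.
pose inA (z : R * R) := [&& (a <= z.1)%R, (z.1 <= z.2)%R & (z.2 <= x)%R].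
pose A := [set z | inA z].
have memA z : (z \in A) = inA z by apply/idP/idP => [/set_mem|/mem_set].
have mA : measurable A.
  have minA : measurable_fun setT inA.
    by apply: measurable_and; [|apply: measurable_and]; exact: measurable_fun_ler.
  by have := minA measurableT [set true] I; rewrite setTI.
have r_section r : \int[lebesgue_measure]_s (\1_A (r, s))%:E =
    ((fun r => (x - r)%:E) \_ [set` `[a, x]]) r.
  rewrite /patch mem_setE /= in_itv /=.
  case: ifPn => [/andP[ar rx]|arx].
    rewrite (eq_integral (fun s : measurableTypeR R => (\1_[set` `[r, x]] s)%:E)); last first.
      by move=> s _; rewrite !indicE memA mem_setE /= in_itv /= /inA /= ar.
    rewrite integral_indic // setIT.
    have := @lebesgue_measure_itv R `[r, x]; rewrite /= lte_fin => ->.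
    by case: ltgtP rx => // <-; rewrite subrr.
  rewrite (eq_integral (cst 0)) ?integral0 // => s _.
  rewrite /= indicE memA /inA /=; case: (boolP (a <= r)%R) arx => //= ar arx.
  by case: (boolP (r <= s)%R) => //= rs; rewrite (contraNF (le_trans rs) arx).
have s_section s : \int[mu]_r (\1_A (r, s))%:E =
    ((fun s => mu [set` `[a, s]]) \_ [set` `[a, x]]) s.
  rewrite /patch mem_setE /= in_itv /=.
  case: ifPn => [/andP[_ sx]|asx].
    rewrite (eq_integral (fun r => (\1_[set` `[a, s]] r)%:E)) ?integral_indic ?setIT //.
    by move=> r _; rewrite !indicE memA mem_setE /= in_itv /= /inA /= sx andbT.
  rewrite (eq_integral (cst 0)) ?integral0 // => r _.
  rewrite /= indicE memA /inA /=; case: (boolP (a <= r)%R) => //= ar.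
  case: (boolP (r <= s)%R) => //= rs.
  by move: asx; rewrite (le_trans ar rs) /= => /negbTE ->.
rewrite integral_mkcond [RHS]integral_mkcond.
transitivity (\int[mu]_r \int[lebesgue_measure]_s (\1_A (r, s))%:E).
  by apply: eq_integral => r _; rewrite r_section.
rewrite (fubini_tonelli (m1:=mu) (m2:=lebesgue_measure) (EFin \o \1_A)); last 2 first.
- by apply/measurable_EFinP; exact: measurable_indic.
- by move=> z; rewrite lee_fin.
by apply: eq_integral => s _; exact: s_section.
Qed.

Lemma integral_itv_subr_Ghat (mu : probability R R) a x :
  mu [set` `]-oo, a[] = 0 ->
  \int[mu]_(r in [set` `[a, x]]) (x - r)%:E = Ghat a mu x.
Proof.
move=> mu0; rewrite integral_itv_subr_Fubini /Ghat /Gcdf.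
apply: eq_integral => s _.
by rewrite (measure_Iic_eq_Icc _ _ s mu0) fineK // fin_num_measure.
Qed.

Lemma ge0_integral_two_point {mu} {p q e b : R} :
  (0 <= p)%R -> (0 <= q)%R ->
  (forall A, measurable A -> mu A = p%:E * \d_e A + q%:E * \d_b A) ->
  forall (D : set R) (f : R -> \bar R), measurable D -> measurable_fun D f ->
  (forall x, D x -> 0 <= f x) ->
  \int[mu]_(x in D) f x = p%:E * (\d_e D * f e) + q%:E * (\d_b D * f b).
Proof.
move=> p0 q0 muE D f mD mf f0.
pose nu := measure_add (mscale (NngNum p0) \d_e) (mscale (NngNum q0) \d_b).
rewrite (eq_measure_integral nu); last by move=> A mA _; rewrite muE //; exact/esym/measure_addE.
by rewrite ge0_integral_measure_add // !ge0_integral_mscale // !integral_dirac.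
Qed.

Lemma integral_itv_subr_two_point {mu} {p q a e b x : R} :
  (0 <= p)%R -> (0 <= q)%R ->
  (forall A, measurable A -> mu A = p%:E * \d_e A + q%:E * \d_b A) ->
  (a <= e)%R -> (x <= b)%R ->
  \int[mu]_(r in [set` `[a, x]]) (x - r)%:E = (p * Num.max 0 (x - e))%:E.
Proof.
move=> p0 q0 muE ae xb.
rewrite (ge0_integral_two_point p0 q0 muE) //; last 2 first.
- exact: measurable_EFin_subr.
- by move=> r /=; rewrite in_itv /= => /andP[_ rx]; rewrite lee_fin subr_ge0.
have b_term : \d_b [set` `[a, x]] * (x - b)%:E = 0.
  rewrite diracE; case: (boolP (b \in _)) => [/set_mem/=|_]; last by rewrite mul0e.
  rewrite in_itv /= => /andP[_ bx].
  have -> : x = b by apply/le_anti; rewrite xb bx.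
  by rewrite subrr mule0.
rewrite b_term mule0 adde0 diracE -EFinM; congr (_ * _)%:E.
case: (leP e x) => ex.
  have -> : e \in [set` `[a, x]] by apply/mem_set; rewrite /= in_itv /= ae ex.
  by rewrite mul1r max_r // subr_ge0.
have -> : e \in [set` `[a, x]] = false.
  by apply/memNset; rewrite /= in_itv /= => /andP[_ xe]; move: ex; rewrite ltNge xe.
by rewrite mul0r max_l // subr_le0 ltW.
Qed.

Lemma probability_Iio_eq0 (mu : probability R R) a b :
  mu [set` `[a, b]] = 1 -> mu [set` `]-oo, a[] = 0.
Proof.
move=> mu1; apply/eqP; rewrite eq_le measure_ge0 andbT.
have <- : mu (~` [set` `[a, b]]) = 0 by rewrite probability_setC // mu1 subee.
apply: le_measure; rewrite ?inE //; first exact: measurableC.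
by move=> r /=; rewrite !in_itv /= => ra /andP[ar _]; move: ra; rewrite ltNge ar.
Qed.

End price_integral.

Lemma probability_integral_cst {d} {T : measurableType d} {R : realType}
  (P : probability T R) (c : R) : (\int[P]_t c%:E = c%:E)%E.
Proof. by rewrite -[RHS]mule1 -(probability_setT P) -integral_cst. Qed.

Lemma measurable_EFin_max0_subr {d} {T : measurableType d} {R : realType}
  {v : T -> R} (c : R) : measurable_fun setT v ->
  measurable_fun setT (fun t => (Num.max 0 (v t - c))%:E).
Proof.
by move=> mv; apply/measurable_EFinP; apply: measurable_maxr => //; exact: measurable_funB.
Qed.

Section bounded_value.
Context {d} {T : measurableType d} {R : realType} (P : probability T R).
Context {v : T -> R} {a b : R}.
Hypotheses (mv : measurable_fun setT v) (vab : forall t, a <= v t <= b).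
Local Open Scope ereal_scope.

Let mvE : measurable_fun setT (fun t => (v t)%:E).
Proof. exact/measurable_EFinP. Qed.

Lemma integral_value_itv :
  a%:E <= \int[P]_t (v t)%:E <= b%:E.
Proof.
apply/andP; split;
  [rewrite -(probability_integral_cst P a)|rewrite -(probability_integral_cst P b)];
  by apply: le_measurable_integral => // t _; rewrite lee_fin; case/andP: (vab t).
Qed.

Lemma EFin_Ev : (Ev P v)%:E = \int[P]_t (v t)%:E.
Proof.
case/andP: integral_value_itv => aI Ib.
by rewrite /Ev fineK // fin_numElt (lt_le_trans _ aI) ?(le_lt_trans Ib) ?ltNyr ?ltry.
Qed.

Lemma Ev_itv : (a <= Ev P v <= b)%R.
Proof. by rewrite -!lee_fin EFin_Ev; exact: integral_value_itv. Qed.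

Lemma fin_num_Dgap : Dgap P v \is a fin_num.
Proof.
have mM := measurable_EFin_max0_subr (Ev P v) mv.
have Dge0 : 0 <= Dgap P v by apply: integral_ge0 => t _; rewrite lee_fin le_max lexx.
have Dle : Dgap P v <= \int[P]_t (b - a)%:E.
  apply: le_measurable_integral => // t _; rewrite lee_fin ge_max.
  case/andP: (vab t) => avt vtb; case/andP: Ev_itv => aE _.
  by rewrite subr_ge0 (le_trans avt vtb) lerB.
rewrite ge0_fin_numE // (le_lt_trans Dle) //.
by rewrite probability_integral_cst ltry.
Qed.

End bounded_value.

Section mechanism_one.
Context {d} {T : measurableType d} {R : realType} {P : probability T R}.
Context {v : T -> R} {vmin vmax : R}.
Local Open Scope ereal_scope.

Lemma Lnet_eq_Ucoop (mu : probability R R) : Lnet P v vmin mu = Ucoop P v vmin mu.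
Proof.
by apply: eq_integral => t _; rewrite ereal_sup_integral_itv_subr.
Qed.

Lemma Ucoop_eq_Ghat {mu : probability R R} : mu [set` `[vmin, vmax]] = 1 ->
  Ucoop P v vmin mu = \int[P]_t Ghat vmin mu (v t).
Proof.
move=> /probability_Iio_eq0 mu0; apply: eq_integral => t _.
by rewrite ereal_sup_integral_itv_subr integral_itv_subr_Ghat.
Qed.

Hypotheses (mv : measurable_fun setT v) (vsupp : forall t, (vmin <= v t <= vmax)%R).
Context {p : R} {mu : probability R R}.
Hypotheses (p01 : (0 <= p <= 1)%R)
  (muE : forall A, measurable A ->
     mu A = p%:E * \d_(Ev P v) A + (1 - p)%:E * \d_vmax A).

Let p0 : (0 <= p)%R. Proof. by case/andP: p01. Qed.
Let q0 : (0 <= 1 - p)%R. Proof. by case/andP: p01 => _; rewrite subr_ge0. Qed.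
Let vminE : (vmin <= Ev P v)%R. Proof. by case/andP: (Ev_itv P mv vsupp). Qed.

Lemma Lnet_two_point : Lnet P v vmin mu = p%:E * Dgap P v.
Proof.
have mM := measurable_EFin_max0_subr (Ev P v) mv.
rewrite /Lnet (eq_integral (fun t => p%:E * (Num.max 0 (v t - Ev P v))%:E)).
  by rewrite ge0_integralZl_EFin // => t _; rewrite lee_fin le_max lexx.
move=> t _; rewrite -EFinM.
by apply: integral_itv_subr_two_point p0 q0 muE vminE _; case/andP: (vsupp t).
Qed.

Lemma Uheur_two_point : Uheur P v vmin mu = 0.
Proof.
rewrite /Uheur ereal_sup_integral_itv_subr.
rewrite (integral_itv_subr_two_point p0 q0 muE vminE) ?subrr ?maxxx ?mulr0 //.
by case/andP: (Ev_itv P mv vsupp).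
Qed.

End mechanism_one.

Theorem mainTheorem5 (R : realType) (d : measure_display) (T : measurableType d)
    (P : probability T R) (v : T -> R) (vmin vmax : R)
    (hvmin : 0 <= vmin) (hv : vmin < vmax)
    (mv : measurable_fun setT v)
    (vsupp : forall t, vmin <= v t <= vmax) :
  (forall mu : probability R R, mu [set` `[vmin, vmax]] = 1%E ->
     Lnet P v vmin mu = Ucoop P v vmin mu /\
     Ucoop P v vmin mu = (\int[P]_t Ghat vmin mu (v t))%E) /\
  (forall c' : R, (0 < Dgap P v)%E -> 0 < c' -> (c'%:E <= Dgap P v)%E ->
   forall mu : probability R R,
     (forall A : set R, measurable A ->
        mu A = ((c' / fine (Dgap P v))%:E * \d_(Ev P v) A
               + (1 - c' / fine (Dgap P v))%:E * \d_vmax A)%E) ->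
     Ucoop P v vmin mu = c'%:E /\
     Uheur P v vmin mu = 0%E /\
     (Ucoop P v vmin mu - Uheur P v vmin mu)%E = c'%:E /\
     (forall c : R, c < c' -> truthful P v vmin mu c) /\
     Lnet P v vmin mu = c'%:E).
Proof.
split=> [mu mu1|c' Dpos c'pos c'D mu muE].
  by split; [exact: Lnet_eq_Ucoop|exact: Ucoop_eq_Ghat mu1].
have DE : (fine (Dgap P v))%:E = Dgap P v by rewrite fineK // (fin_num_Dgap P mv vsupp).
have Dgt0 : 0 < fine (Dgap P v) by rewrite -lte_fin DE.
have p01 : 0 <= c' / fine (Dgap P v) <= 1.
  apply/andP; split; first by rewrite divr_ge0 // ltW.
  by rewrite ler_pdivrMr // mul1r -lee_fin DE.
have Lnet_c' : Lnet P v vmin mu = c'%:E.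
  by rewrite (Lnet_two_point mv vsupp p01 muE) -DE -EFinM divfK // gt_eqF.
have Uheur0 := Uheur_two_point mv vsupp p01 muE.
have Ucoop_c' : Ucoop P v vmin mu = c'%:E by rewrite -Lnet_eq_Ucoop.
rewrite Ucoop_c' Uheur0 sube0; do 4 split => //.
by move=> c cc'; rewrite /truthful Ucoop_c' Uheur0 sube0 lte_fin.
Qed.
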